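(* Within the pseudovariety $\mathsf M$ of all finite monoids, the pseudoidentity $x^\omega=1$ is h-strong.
   Context: $\mathsf M$ is the pseudovariety of finite monoids (signature: multiplication and $1$); $\Omega_A\mathsf M$ is the free profinite monoid on a finite set $A$; in a profinite monoid $x^\omega=\lim x^{n!}$. An $\mathsf M$-pseudoidentity is $u=v$ with $u,v\in\Omega_B\mathsf M$, $B$ finite; it holds in a finite monoid $T$ if both sides agree under every continuous homomorphism $\Omega_B\mathsf M\to T$; $[\![\Sigma]\!]$ is the class of finite monoids satisfying $\Sigma$. Provability: for finite $A$, $\Sigma_0\subseteq\Omega_A\mathsf M\times\Omega_A\mathsf M$ is the set of pairs $(\mathbf t(\varphi(u),w_1,\dots,w_n),\mathbf t(\varphi(v),w_1,\dots,w_n))$ with $u=v$ or $v=u$ in $\Sigma$ ($u,v\in\Omega_B\mathsf M$), $\varphi:\Omega_B\mathsf M\to\Omega_A\mathsf M$ a continuous homomorphism, $\mathbf t$ a monoid term, $w_i\in\Omega_A\mathsf M$; $\Sigma_{2\alpha+1}$ is the transitive closure of $\Sigma_{2\alpha}$, $\Sigma_{2\alpha+2}$ the topological closure of $\Sigma_{2\alpha+1}$, unions at limit ordinals; $u=v$ is provable from $\Sigma$ if $(u,v)\in\bigcup_\alpha\Sigma_\alpha$. A pseudoidentity $\varepsilon$ is h-strong within $\mathsf M$ if every $\mathsf M$-pseudoidentity valid in $[\![\{\varepsilon\}]\!]$ is provable from $\{\varepsilon\}$. *)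

From mathcomp Require Import all_boot zify.

Set Implicit Arguments. Unset Strict Implicit. Unset Printing Implicit Defensive.

Record finMonoid := FinMonoid {
  fm_sort :> finType;
  fm_mul : fm_sort -> fm_sort -> fm_sort;
  fm_one : fm_sort;
  fm_mulA : associative fm_mul;
  fm_mul1 : left_id fm_one fm_mul;
  fm_mulr1 : right_id fm_one fm_mul }.

Arguments fm_mul {_}. Arguments fm_one {_}.

Definition is_mhom (S T : finMonoid) (f : S -> T) : Prop :=
  f fm_one = fm_one /\ forall x y, f (fm_mul x y) = fm_mul (f x) (f y).

Fixpoint fm_pow (T : finMonoid) (a : T) (n : nat) : T :=
  if n is n'.+1 then fm_mul a (fm_pow a n') else fm_one.

Lemma mhom_pow (S T : finMonoid) (f : S -> T) a n : is_mhom f -> f (fm_pow a n) = fm_pow (f a) n.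
Proof. by case=> h1 hM; elim: n => [|n IH] //=; rewrite hM IH. Qed.

Lemma fm_powD (T : finMonoid) (a : T) m n :
  fm_pow a (m + n) = fm_mul (fm_pow a m) (fm_pow a n).
Proof. by elim: m => [|m IH] /=; rewrite ?fm_mul1 // IH fm_mulA. Qed.

Lemma fm_pow_fact (T : finMonoid) (a : T) m :
  #|T| <= m -> fm_pow a m`! = fm_pow a (#|T|)`!.
Proof.
move=> hm.
have : ~~ injectiveb (fun i : 'I_(#|T|.+1) => fm_pow a i).
  apply/negP => /injectiveP inj; have := @leq_card _ _ _ inj.
  by rewrite card_ord ltnn.
case/injectivePn => i [j] nij eij.
wlog lij : i j nij eij / i < j.
  move=> W; case: (ltngtP i j) => [h|h|h]; first exact: W h.
    by apply: (W j i) => //; rewrite eq_sym.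
  by move: nij; rewrite (val_inj h) eqxx.
set k := #|T|; set p := j - i.
have hper n : i <= n -> forall q, fm_pow a (n + q * p) = fm_pow a n.
  move=> hin; elim=> [|q IH]; first by rewrite addn0.
  rewrite mulSn addnA -IH.
  have -> : n + p + q * p = (n - i) + j + q * p.
    rewrite /p; have := ltn_ord j; lia.
  have -> : n + q * p = (n - i) + i + q * p by rewrite subnK.
  by rewrite !fm_powD eij.
have p0 : 0 < p by rewrite subn_gt0.
have pk : p <= k by rewrite /p; have := ltn_ord j; lia.
have hp : p %| k`! by apply: dvdn_fact; rewrite p0 pk.
have hpm : p %| m`! by apply: dvdn_fact; rewrite p0 (leq_trans pk hm).
have ik : i <= k`! by apply: leq_trans (fact_geq k); have := ltn_ord j; lia.
have km : k`! <= m`! := leq_fact hm.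
have -> : m`! = k`! + (m`! - k`!) %/ p * p.
  by rewrite divnK ?subnKC // dvdn_sub.
exact: hper.
Qed.

(* ---------- free profinite monoid Omega_A M, as implicit operations ---------- *)
Definition implicit_op (A : finType) := forall T : finMonoid, (A -> T) -> T.
Definition natural (A : finType) (w : implicit_op A) : Prop :=
  forall (S T : finMonoid) (f : S -> T), is_mhom f ->
    forall e : A -> S, f (w S e) = w T (f \o e).
Definition Omega (A : finType) := {w : implicit_op A | natural w}.
Definition ev (A : finType) (x : Omega A) (T : finMonoid) (e : A -> T) : T :=
  proj1_sig x T e.
Arguments ev {A} x T e.

Section Ops.
Variable A : finType.

Lemma om_mul_nat (x y : Omega A) :
  natural (fun T e => fm_mul (ev x T e) (ev y T e)).
Proof.
move=> S T f hf e; case: (hf) => _ hM; rewrite hM.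
by rewrite /ev (proj2_sig x _ _ _ hf) (proj2_sig y _ _ _ hf).
Qed.
Definition om_mul (x y : Omega A) : Omega A := exist _ _ (om_mul_nat x y).

Lemma om_one_nat : natural (fun T (e : A -> T) => fm_one).
Proof. by move=> S T f [h1 _] e. Qed.
Definition om_one : Omega A := exist _ _ om_one_nat.

(* x^omega = lim x^{n!}: in a finite monoid T the sequence a^{n!} is
   constant from n = #|T| on (lemma fm_pow_fact), so the T-component of the
   limit is a^{#|T|!}. *)
Lemma om_omega_nat (x : Omega A) :
  natural (fun T e => fm_pow (ev x T e) (#|T|)`!).
Proof.
move=> S T f hf e; set M := maxn #|S| #|T|.
rewrite -(fm_pow_fact _ (leq_maxl #|S| #|T|)) (mhom_pow _ _ hf).
by rewrite /ev (proj2_sig x _ _ _ hf) (fm_pow_fact _ (leq_maxr #|S| #|T|)).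
Qed.
Definition om_omega (x : Omega A) : Omega A := exist _ _ (om_omega_nat x).

Lemma om_letter_nat (a : A) : natural (fun T (e : A -> T) => e a).
Proof. by []. Qed.
Definition om_letter (a : A) : Omega A := exist _ _ (om_letter_nat a).

Definition test := {T : finMonoid & A -> T}.
(* x and y agree on every test in ts; the sets {y | agree ts x y} form a
   base of neighbourhoods of x *)
Fixpoint agree (ts : seq test) (x y : Omega A) : Prop :=
  if ts is t :: ts' then
    ev x (projT1 t) (projT2 t) = ev y (projT1 t) (projT2 t) /\ agree ts' x y
  else True.

(* topologically closed binary relation on Omega A (closed in Omega A x Omega A) *)
Definition closed_rel (R : Omega A -> Omega A -> Prop) : Prop :=
  forall u v, (forall ts1 ts2 : seq test,
      exists u' v', R u' v' /\ agree ts1 u u' /\ agree ts2 v v') -> R u v.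

(* evaluation of a monoid term (a word over variables 0, 1, 2, ...) *)
Definition term_eval (t : seq nat) (vals : seq (Omega A)) : Omega A :=
  foldr (fun i acc => om_mul (nth om_one vals i) acc) om_one t.
End Ops.

Arguments om_one {A}.

Definition om_hom (B A : finType) (phi : Omega B -> Omega A) : Prop :=
  phi om_one = om_one /\ forall x y, phi (om_mul x y) = om_mul (phi x) (phi y).
Definition om_continuous (B A : finType) (phi : Omega B -> Omega A) : Prop :=
  forall (x : Omega B) (ts : seq (test A)), exists ts' : seq (test B),
    forall y, agree ts' x y -> agree ts (phi x) (phi y).

Definition om_hom_fin (B : finType) (T : finMonoid) (psi : Omega B -> T) : Prop :=
  psi om_one = fm_one /\ forall x y, psi (om_mul x y) = fm_mul (psi x) (psi y).
Definition om_continuous_fin (B : finType) (T : finMonoid) (psi : Omega B -> T)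
  : Prop :=
  forall x : Omega B, exists ts : seq (test B),
    forall y, agree ts x y -> psi x = psi y.

Definition pseudoid := {B : finType & (Omega B * Omega B)%type}.

Definition holds_in (T : finMonoid) (B : finType) (u v : Omega B) : Prop :=
  forall psi : Omega B -> T, om_hom_fin psi -> om_continuous_fin psi ->
    psi u = psi v.

Definition models (Sigma : pseudoid -> Prop) (T : finMonoid) : Prop :=
  forall e, Sigma e -> holds_in T (projT2 e).1 (projT2 e).2.

Definition Sigma0 (Sigma : pseudoid -> Prop) (A : finType)
    (p q : Omega A) : Prop :=
  exists (e : pseudoid) (sym : bool) (phi : Omega (projT1 e) -> Omega A)
         (t : seq nat) (ws : seq (Omega A)),
    [/\ Sigma e, om_hom phi, om_continuous phi,
        p = term_eval t (phi (if sym then (projT2 e).2 else (projT2 e).1) :: ws)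
      & q = term_eval t (phi (if sym then (projT2 e).1 else (projT2 e).2) :: ws)].

(* the union of the transfinite chain Sigma_alpha is the least relation
   containing Sigma_0 that is transitive and topologically closed *)
Definition provable (Sigma : pseudoid -> Prop) (A : finType)
    (p q : Omega A) : Prop :=
  forall R : Omega A -> Omega A -> Prop,
    (forall p' q', @Sigma0 Sigma A p' q' -> R p' q') ->
    (forall a b c, R a b -> R b c -> R a c) ->
    closed_rel R -> R p q.

Definition h_strong (Sigma : pseudoid -> Prop) : Prop :=
  forall (B : finType) (u v : Omega B),
    (forall T : finMonoid, models Sigma T -> holds_in T u v) ->
    @provable Sigma B u v.

(* the pseudoidentity x^omega = 1 over the one-letter alphabet {x} = unit *)
Definition omega_eq_one : pseudoid :=
  existT (fun B : finType => (Omega B * Omega B)%type) unit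
    (om_omega (om_letter tt), om_one).

(* Let S be the submonoid generated by the letters under an assignment
   e : B -> T.  A limit of omega-powers defines an implicit operation whose value
   is always an idempotent f of the minimal ideal (kernel) of S, so it is
   provably equal to 1.  Replacing every letter b by f b f, every u is then
   provably equal to f u(f b f), whose value is that of u in the local monoid
   f S f under b |-> f e(b) f.  As f lies in the kernel, f S f is a group and
   thus satisfies x^omega = 1; so if u = v holds in all models of x^omega = 1,
   then f u(f b f) = f v(f b f) and u = v is provable. *)

From mathcomp Require Import all_boot zify.
From Stdlib Require Import FunctionalExtensionality ProofIrrelevance.

Set Implicit Arguments. Unset Strict Implicit. Unset Printing Implicit Defensive.

Local Notation "x ** y" := (fm_mul x y) (at level 40, left associativity).

Section FiniteMonoid.
Variable T : finMonoid.
Implicit Types a e l y : T.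

Lemma fm_powSr a n : fm_pow a n.+1 = fm_pow a n ** a.
Proof. by rewrite -addn1 fm_powD /= fm_mulr1. Qed.

Lemma fm_powM a m n : fm_pow a (m * n) = fm_pow (fm_pow a n) m.
Proof. by elim: m => [|m IH] //=; rewrite mulSn fm_powD IH. Qed.

Lemma fm_pow_fact_idem a :
  fm_pow a #|T|`! ** fm_pow a #|T|`! = fm_pow a #|T|`!.
Proof.
set n := #|T|; set e := fm_pow a n`!.
have e_period : fm_pow e n.+1 = e.
  by rewrite /e -fm_powM -factS fm_pow_fact.
have e_period2 : fm_pow e (n.+2 * n.+1) = e.
  by rewrite /e -fm_powM -mulnA -!factS fm_pow_fact // /n; lia.
(* e^(n+1) = e gives e^(1 + j n) = e for all j, and (n+2)(n+1) = 2 mod n *)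
have e_cycle j : fm_pow e (1 + j * n) = e.
  elim: j => [|j IH]; first by rewrite /= fm_mulr1.
  by rewrite mulSn addnCA fm_powD IH -fm_powSr.
rewrite (_ : n.+2 * n.+1 = (1 + n.+3 * n) + 1) in e_period2; last by lia.
by rewrite fm_powD e_cycle /= fm_mulr1 in e_period2.
Qed.

Lemma fm_mul_eq1C l y : l ** y = fm_one -> y ** l = fm_one.
Proof.
move=> ly1.
have inj_y : injective (fm_mul y).
  by move=> a b yab; rewrite -[a]fm_mul1 -[b]fm_mul1 -ly1 -!fm_mulA yab.
have [r yr1] : exists r, y ** r = fm_one.
  by have /codomP [r ->] := injF_onto inj_y fm_one; exists r.
suff -> : l = r by [].
by rewrite -[l]fm_mulr1 -yr1 fm_mulA ly1 fm_mul1.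
Qed.

Lemma fm_pow_mul_eq1 l y n : l ** y = fm_one -> fm_pow l n ** fm_pow y n = fm_one.
Proof.
move=> ly1; elim: n => [|n IH]; first by rewrite /= fm_mul1.
by rewrite fm_powSr /= -fm_mulA (fm_mulA l) ly1 fm_mul1.
Qed.

Lemma fm_idem_linv e l : e ** e = e -> l ** e = fm_one -> e = fm_one.
Proof. by move=> ee le1; rewrite -le1 -{2}ee fm_mulA le1 fm_mul1. Qed.

Lemma fm_linv_pow_fact l y m :
  l ** y = fm_one -> #|T| <= m -> fm_pow y m`! = fm_one.
Proof.
move=> ly1 hm; rewrite fm_pow_fact //.
exact: fm_idem_linv (fm_pow_fact_idem y) (fm_pow_mul_eq1 _ ly1).
Qed.

End FiniteMonoid.

Section MonoidConstructions.
Variables S T : finMonoid.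

Definition trivial_monoid : finMonoid.
Proof. by refine (@FinMonoid unit (fun _ _ => tt) tt _ _ _); do ?case. Defined.

Definition prod_monoid : finMonoid.
Proof.
refine (@FinMonoid (S * T)%type (fun x y => (x.1 ** y.1, x.2 ** y.2))
          (fm_one, fm_one) _ _ _).
- by move=> [a1 a2] [b1 b2] [c1 c2]; rewrite /= !fm_mulA.
- by move=> [a1 a2]; rewrite /= !fm_mul1.
- by move=> [a1 a2]; rewrite /= !fm_mulr1.
Defined.

Lemma fst_mhom : is_mhom (fun x : prod_monoid => x.1 : S).
Proof. by []. Qed.

Lemma snd_mhom : is_mhom (fun x : prod_monoid => x.2 : T).
Proof. by []. Qed.

Definition adjoin_one_mul (x y : option S) : option S :=
  match x, y with
  | None, _ => y
  | _, None => x
  | Some a, Some b => Some (a ** b)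
  end.

Definition adjoin_one : finMonoid.
Proof.
refine (@FinMonoid (option S) adjoin_one_mul None _ _ _) => //.
- by move=> [a|] [b|] [c|] //=; rewrite fm_mulA.
- by case.
Defined.

End MonoidConstructions.

Section Words.
Variables (B : finType) (T : finMonoid) (e : B -> T).

Definition wval (w : seq B) : T := foldr (fun b acc => e b ** acc) fm_one w.

Lemma wval_cat w1 w2 : wval (w1 ++ w2) = wval w1 ** wval w2.
Proof. by elim: w1 => [|b w IH] /=; rewrite ?fm_mul1 // IH fm_mulA. Qed.

Definition generated (y : T) : Prop := exists w, wval w = y.

Lemma generated1 : generated fm_one.
Proof. by exists [::]. Qed.

Lemma generatedM x y : generated x -> generated y -> generated (x ** y).
Proof. by case=> w1 <- [w2 <-]; exists (w1 ++ w2); rewrite wval_cat. Qed.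

Lemma generated_letter b : generated (e b).
Proof. by exists [:: b]; rewrite /= fm_mulr1. Qed.

Lemma generated_pow x n : generated x -> generated (fm_pow x n).
Proof. by move=> gx; elim: n => [|n IH] /=; [exact: generated1 | exact: generatedM]. Qed.

Lemma generated_wval w : generated (wval w).
Proof. by exists w. Qed.

Definition covered_by (L : nat) : Prop :=
  forall w, exists2 w', size w' < L & wval w' = wval w.

(* pumping: a word of length >= #|T| has two prefixes with the same value *)
Lemma covered_by_card : covered_by #|T|.
Proof.
move=> w; elim: {w}(size w) {-2}w (leqnn (size w)) => [|n IH] w hw.
  by case: w hw => // _; exists [::] => //; apply/card_gt0P; exists fm_one.
have [|le_T_w] := ltnP (size w) #|T|; first by exists w.
have : ~~ injectiveb (fun i : 'I_(size w).+1 => wval (take i w)).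
  apply/injectiveP => /leq_card; rewrite card_ord.
  by apply/negP; rewrite -ltnNge ltnS.
case/injectivePn => i [j] nij eij.
wlog lij : i j nij eij / i < j.
  move=> W; case: (ltngtP i j) => [h|h|h]; first exact: W h.
    by apply: (W j i) => //; rewrite eq_sym.
  by move: nij; rewrite (val_inj h) eqxx.
have jw : j <= size w by rewrite -ltnS.
have [|w' short_w' e_w'] := IH (take i w ++ drop j w).
  rewrite size_cat size_take (leq_trans lij jw) size_drop; lia.
by exists w'; rewrite // e_w' wval_cat eij -wval_cat cat_take_drop.
Qed.

End Words.

Lemma wval_mhom (B : finType) (S T : finMonoid) (h : S -> T) (e : B -> S) w :
  is_mhom h -> h (wval e w) = wval (h \o e) w.
Proof. by case=> h1 hM; elim: w => [|b w IH] //=; rewrite hM IH. Qed.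

Lemma covered_by_mhom (B : finType) (S T : finMonoid) (h : S -> T) (e : B -> S) :
  is_mhom h -> covered_by (h \o e) #|S|.
Proof.
move=> hh w; have [w' short_w' e_w'] := covered_by_card e w.
by exists w' => //; rewrite -!wval_mhom // e_w'.
Qed.

Fixpoint words_below (B : finType) (N : nat) : seq (seq B) :=
  if N is N'.+1 then [::] :: [seq b :: w | b <- enum B, w <- words_below B N']
  else [::].

Lemma mem_words_below (B : finType) N (w : seq B) : size w < N -> w \in words_below B N.
Proof.
elim: N w => [|N IH] [|b w] //= h; rewrite in_cons; apply/orP; right.
by apply: (allpairs_f (fun b w => b :: w)); rewrite ?mem_enum // IH.
Qed.

Section LocalMonoid.
Variables (B : finType) (T : finMonoid) (e : B -> T).

Definition generatedb (y : T) : bool :=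
  has (fun w => wval e w == y) (words_below B #|T|).

Lemma generatedP y : reflect (generated e y) (generatedb y).
Proof.
apply: (iffP hasP) => [[w _ /eqP <-]|[w <-]]; first exact: generated_wval.
have [w' short_w' e_w'] := covered_by_card e w.
by exists w'; rewrite ?mem_words_below // e_w'.
Qed.

(* the monoid f S f, where S is the submonoid generated by the letters *)
Variable f : T.
Hypotheses (f_idem : f ** f = f) (f_gen : generated e f).

Definition in_local (y : T) : bool := (f ** y ** f == y) && generatedb y.

Lemma in_localP y : reflect [/\ f ** y = y, y ** f = y & generated e y] (in_local y).
Proof.
apply: (iffP andP) => [[/eqP fyf /generatedP gy]|[fy yf gy]].
  by split=> //; rewrite -fyf; [rewrite !fm_mulA f_idem | rewrite -fm_mulA f_idem].
by rewrite fy yf eqxx; split=> //; apply/generatedP.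
Qed.

Lemma in_local_sandwich y : generated e y -> in_local (f ** y ** f).
Proof.
move=> gy; apply/in_localP; split.
- by rewrite !fm_mulA f_idem.
- by rewrite -fm_mulA f_idem.
- by apply: generatedM => //; apply: generatedM.
Qed.

Definition local_type := {y : T | in_local y}.

Lemma in_localM (x y : local_type) : in_local (val x ** val y).
Proof.
case/in_localP: (valP x) => fx xf gx; case/in_localP: (valP y) => fy yf gy.
by apply/in_localP; rewrite -fm_mulA yf fm_mulA fx; split=> //; exact: generatedM.
Qed.

Lemma in_local_id : in_local f.
Proof. by apply/in_localP; split. Qed.

Definition local_monoid : finMonoid.
Proof.
refine (@FinMonoid local_type (fun x y => exist in_local _ (in_localM x y))
          (exist in_local _ in_local_id) _ _ _).
- by move=> x y z; apply: val_inj; rewrite /= fm_mulA.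
- by move=> [y ly]; apply: val_inj; case/in_localP: (ly).
- by move=> [y ly]; apply: val_inj; case/in_localP: (ly).
Defined.

Lemma val_local_pow (y : local_monoid) n : val (fm_pow y n) = f ** fm_pow (val y) n.
Proof.
elim: n => [|n IH] /=; first by rewrite fm_mulr1.
case/in_localP: (valP y) => fy yf _.
by rewrite IH !fm_mulA yf fy.
Qed.

Lemma card_local_monoid : #|local_monoid| <= #|T|.
Proof. by rewrite card_sig max_card. Qed.

End LocalMonoid.

(* for f in S, this says that f lies in the minimal ideal of S *)
Definition in_kernel (B : finType) (T : finMonoid) (e : B -> T) (f : T) : Prop :=
  forall y, generated e y ->
    exists a b, [/\ generated e a, generated e b & f = a ** y ** b].

Section LocalGroup.
Variables (B : finType) (T : finMonoid) (e : B -> T) (f : T).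
Hypotheses (f_idem : f ** f = f) (f_gen : generated e f) (f_min : in_kernel e f).

Let G := local_monoid f_idem f_gen.

(* f = a y b in S gives y the left inverse (f b f)(f a f) in G *)
Lemma local_monoid_pow_fact (z : G) m : #|T| <= m -> fm_pow z m`! = fm_one.
Proof.
move=> hm; case/(in_localP e f_idem): (valP z) => fy yf gy.
have [a [b [ga gb fayb]]] := f_min gy.
pose a' : G := exist (in_local e f) _ (in_local_sandwich f_idem f_gen ga).
pose b' : G := exist (in_local e f) _ (in_local_sandwich f_idem f_gen gb).
have azb1 : a' ** z ** b' = fm_one.
  apply: val_inj => /=; set y := val z in fy yf fayb *.
  rewrite !fm_mulA -[f ** a ** f ** y]fm_mulA fy -[f ** a ** y ** f]fm_mulA yf.
  by rewrite -!fm_mulA (fm_mulA a) (fm_mulA (a ** y)) -fayb !f_idem.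
have bazb1 : b' ** a' ** z = fm_one.
  by rewrite -fm_mulA; apply: fm_mul_eq1C.
exact: fm_linv_pow_fact bazb1 (leq_trans (card_local_monoid f_idem f_gen) hm).
Qed.

Lemma in_local_pow_fact y m :
  generated e y -> f ** y = y -> y ** f = y -> #|T| <= m -> fm_pow y m`! = f.
Proof.
move=> gy fy yf hm.
have ly : in_local e f y by apply/(in_localP e f_idem).
have := f_equal val (local_monoid_pow_fact (exist (in_local e f) y ly : G) hm).
rewrite val_local_pow /= => <-.
by case: (m`!) (fact_gt0 m) => //= k _; rewrite fm_mulA fy.
Qed.

End LocalGroup.

Section ImplicitOperations.
Variable A : finType.
Implicit Types x y z : Omega A.

Lemma om_ext x y : (forall (T : finMonoid) (e : A -> T), ev x T e = ev y T e) -> x = y.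
Proof.
case: x y => [x nx] [y ny] /= exy.
have {exy} xy : x = y.
  by apply: functional_extensionality_dep => T; apply: functional_extensionality.
by subst y; congr exist; apply: proof_irrelevance.
Qed.

Lemma om_mulA x y z : om_mul x (om_mul y z) = om_mul (om_mul x y) z.
Proof. by apply: om_ext => T e; apply: fm_mulA. Qed.

Lemma om_mul1 x : om_mul om_one x = x.
Proof. by apply: om_ext => T e; apply: fm_mul1. Qed.

Lemma om_mulr1 x : om_mul x om_one = x.
Proof. by apply: om_ext => T e; apply: fm_mulr1. Qed.

Definition om_word (w : seq A) : Omega A :=
  foldr (fun a acc => om_mul (om_letter a) acc) om_one w.

Lemma ev_om_word w (T : finMonoid) (e : A -> T) : ev (om_word w) T e = wval e w.
Proof. by elim: w => [|a w IH] //=; rewrite -IH. Qed.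

Definition om_pow x n : Omega A := iter n (om_mul x) om_one.

Lemma ev_om_pow x n (T : finMonoid) (e : A -> T) :
  ev (om_pow x n) T e = fm_pow (ev x T e) n.
Proof. by elim: n => [|n IH] //=; rewrite -IH. Qed.

(* h need not preserve 1; it becomes a monoid morphism on S with a new identity
   adjoined, and naturality for the two morphisms out of it relates both sides *)
Lemma ev_mul_morph (S T : finMonoid) (h : S -> T) x (e : A -> S) :
  {morph h : a b / a ** b} -> h fm_one ** ev x T (h \o e) = h (ev x S e).
Proof.
move=> hM.
pose hT (o : adjoin_one S) : T := if o is Some s then h s else fm_one.
pose hS (o : adjoin_one S) : S := if o is Some s then s else fm_one.
have hT_mhom : is_mhom hT by split=> // -[a|] [b|] //=; rewrite ?fm_mul1 ?fm_mulr1.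
have hS_mhom : is_mhom hS by split=> // -[a|] [b|] //=; rewrite ?fm_mul1 ?fm_mulr1.
have -> : ev x T (h \o e) = hT (ev x (adjoin_one S) (Some \o e)).
  by rewrite /ev (proj2_sig x _ _ _ hT_mhom).
have -> : ev x S e = hS (ev x (adjoin_one S) (Some \o e)).
  by rewrite /ev (proj2_sig x _ _ _ hS_mhom).
by case: (ev x _ _) => [s|] /=; rewrite ?fm_mulr1 // -hM fm_mul1.
Qed.

Lemma ev_generated x (T : finMonoid) (e : A -> T) : generated e (ev x T e).
Proof.
pose S := local_monoid (fm_mul1 fm_one) (generated1 e).
have in_S a : in_local e fm_one (e a).
  apply/(in_localP e (fm_mul1 _)); rewrite fm_mul1 fm_mulr1.
  by split=> //; exact: generated_letter.
pose eS (a : A) : S := exist (in_local e fm_one) _ (in_S a).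
have := ev_mul_morph x eS (fun s t : S => erefl (val (s ** t))).
rewrite /= fm_mul1 => ->.
by case/(in_localP e (fm_mul1 _)): (valP (ev x S eS)).
Qed.

End ImplicitOperations.

Section Agreement.
Variable A : finType.
Implicit Types (x y : Omega A) (ts : seq (test A)).

Lemma agree_refl ts x : agree ts x x.
Proof. by elim: ts => //= t ts IH; split. Qed.

Lemma agree_cat ts1 ts2 x y : agree (ts1 ++ ts2) x y -> agree ts1 x y /\ agree ts2 x y.
Proof. by elim: ts1 => //= t ts IH [h1 /IH [h2 h3]]. Qed.

Lemma agree_mul ts x x' y y' :
  agree ts x x' -> agree ts y y' -> agree ts (om_mul x y) (om_mul x' y').
Proof.
elim: ts => //= t ts IH [xt xts] [yt yts]; split; last exact: IH.
by rewrite /ev /= -/(ev x _ _) -/(ev y _ _) xt yt.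
Qed.

Definition tests_bound ts : nat := \max_(t <- ts) #|projT1 t|.

Lemma agree_bounded ts x y N :
  (forall (T : finMonoid) (e : A -> T), #|T| <= N -> ev x T e = ev y T e) ->
  tests_bound ts <= N -> agree ts x y.
Proof.
move=> exy; elim: ts => //= t ts IH.
by rewrite /tests_bound big_cons geq_max => /andP [/exy ? /IH].
Qed.

Fixpoint tests_monoid ts : finMonoid :=
  if ts is t :: ts' then prod_monoid (projT1 t) (tests_monoid ts') else trivial_monoid.

Fixpoint tests_assign ts : A -> tests_monoid ts :=
  match ts as ts0 return A -> tests_monoid ts0 with
  | [::] => fun _ => tt
  | t :: ts' => fun a => (projT2 t a, tests_assign ts' a)
  end.

Lemma agree_tests_monoid ts x y :
  ev x (tests_monoid ts) (tests_assign ts) = ev y (tests_monoid ts) (tests_assign ts) ->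
  agree ts x y.
Proof.
elim: ts => //= t ts IH exy; split.
  have := f_equal fst exy.
  by rewrite /ev (proj2_sig x _ _ _ (fst_mhom _ _)) (proj2_sig y _ _ _ (fst_mhom _ _)).
apply: IH; have := f_equal snd exy.
by rewrite /ev (proj2_sig x _ _ _ (snd_mhom _ _)) (proj2_sig y _ _ _ (snd_mhom _ _)).
Qed.

Lemma words_dense x ts : exists w, agree ts x (om_word w).
Proof.
have [w ew] := ev_generated x (tests_assign ts).
by exists w; apply: agree_tests_monoid; rewrite ev_om_word.
Qed.

End Agreement.

Section Substitution.
Variables (A B : finType) (s : B -> Omega A).

Lemma om_subst_natural (x : Omega B) :
  natural (fun T (e : A -> T) => ev x T (fun b => ev (s b) T e)).
Proof.
move=> S T h hh e /=; rewrite /ev (proj2_sig x S T h hh).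
congr (proj1_sig x T _); apply: functional_extensionality => b /=.
exact: (proj2_sig (s b) S T h hh e).
Qed.

Definition om_subst (x : Omega B) : Omega A := exist _ _ (om_subst_natural x).

Lemma om_subst_hom : om_hom om_subst.
Proof. by split=> [|x y]; apply: om_ext. Qed.

Definition pull_test (t : test A) : test B :=
  existT (fun T : finMonoid => B -> T) (projT1 t)
    (fun b => ev (s b) (projT1 t) (projT2 t)).

Lemma agree_subst ts (x y : Omega B) :
  agree (map pull_test ts) x y -> agree ts (om_subst x) (om_subst y).
Proof. by elim: ts => //= t ts IH [? /IH]. Qed.

Lemma om_subst_continuous : om_continuous om_subst.
Proof. by move=> x ts; exists (map pull_test ts) => y; apply: agree_subst. Qed.

End Substitution.

Section KernelIdempotent.
Variable B : finType.

Definition words_product (N : nat) : seq B := flatten (words_below B N).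

Lemma words_product_factor N w :
  size w < N -> exists p1 p2, words_product N = p1 ++ w ++ p2.
Proof.
rewrite /words_product => /mem_words_below; case/splitPr => p1 p2.
by exists (flatten p1), (flatten p2); rewrite flatten_cat.
Qed.

(* Once all elements of S are values of words of length < N, every one of them is
   a factor of the value of pi_N = words_product N, so q_(N+1) is an idempotent f
   of the minimal ideal; from then on f pi_N f lies in the group f S f, whose
   omega-power is f, and the sequence is stationary. *)
Fixpoint kernel_approx (N : nat) : Omega B :=
  if N is N'.+1 then
    om_omega (om_mul (kernel_approx N')
                     (om_mul (om_word (words_product N')) (kernel_approx N')))
  else om_one.

Section Evaluation.
Variables (T : finMonoid) (e : B -> T).
Local Notation q N := (ev (kernel_approx N) T e).

Lemma ev_kernel_approxS N :
  q N.+1 = fm_pow (q N ** (wval e (words_product N) ** q N)) #|T|`!.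
Proof. by rewrite /= -ev_om_word. Qed.

Lemma kernel_approxS_idem N : q N.+1 ** q N.+1 = q N.+1.
Proof. by rewrite ev_kernel_approxS fm_pow_fact_idem. Qed.

Lemma kernel_approx_in_kernel L N :
  covered_by e L -> L <= N -> in_kernel e (q N.+1).
Proof.
move=> cov_L le_LN _ [w0 <-]; have [w short_w <-] := cov_L w0.
have [p1 [p2 pi_N]] := words_product_factor (leq_trans short_w le_LN).
rewrite ev_kernel_approxS pi_N !wval_cat; set x := q N.
have [k ->] : exists k, #|T|`! = k.+1 by exists (#|T|`!).-1; rewrite prednK // fact_gt0.
have gx : generated e x := ev_generated _ e.
exists (x ** wval e p1), (wval e p2 ** x **
  fm_pow (x ** (wval e p1 ** (wval e w ** wval e p2) ** x)) k); split.
- exact: generatedM gx (generated_wval e p1).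
- apply: generatedM (generatedM (generated_wval e p2) gx) (generated_pow _ _).
  apply: generatedM gx (generatedM _ gx).
  by rewrite -!wval_cat; exact: generated_wval.
- by rewrite /= !fm_mulA.
Qed.

Lemma kernel_approx_stable L N :
  covered_by e L -> L <= N -> q N.+2 = q N.+1.
Proof.
move=> cov_L le_LN; rewrite [LHS]ev_kernel_approxS; set f := q N.+1.
have f_idem : f ** f = f := kernel_approxS_idem N.
have f_gen : generated e f := ev_generated _ e.
apply: (in_local_pow_fact f_idem f_gen (kernel_approx_in_kernel cov_L le_LN)) => //.
- exact: generatedM f_gen (generatedM (generated_wval e _) f_gen).
- by rewrite fm_mulA f_idem.
- by rewrite -!fm_mulA f_idem.
Qed.

Lemma kernel_approx_const L N : covered_by e L -> L <= N -> q N.+1 = q L.+1.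
Proof.
move=> cov_L; elim: N => [|N IH]; first by rewrite leqn0 => /eqP ->.
rewrite leq_eqVlt => /orP [/eqP -> //|].
by rewrite ltnS => le_LN; rewrite (kernel_approx_stable cov_L le_LN) IH.
Qed.

Lemma kernel_approx_covered L1 L2 :
  covered_by e L1 -> covered_by e L2 -> q L1.+1 = q L2.+1.
Proof.
move=> cov1 cov2; rewrite -(kernel_approx_const cov1 (leq_maxl L1 L2)).
exact: kernel_approx_const cov2 (leq_maxr L1 L2).
Qed.

End Evaluation.

Lemma kernel_idem_natural :
  natural (fun T (e : B -> T) => ev (kernel_approx #|T|.+1) T e).
Proof.
move=> S T h hh e; rewrite /ev (proj2_sig (kernel_approx _) S T h hh e).
exact: kernel_approx_covered (covered_by_mhom e hh) (covered_by_card _).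
Qed.

Definition kernel_idem : Omega B := exist _ _ kernel_idem_natural.

Lemma ev_kernel_idem (T : finMonoid) (e : B -> T) N :
  #|T| <= N -> ev kernel_idem T e = ev (kernel_approx N.+1) T e.
Proof.
move=> le_TN; apply: kernel_approx_covered (covered_by_card e) _ => w.
by have [w' ? ?] := covered_by_card e w; exists w' => //; apply: leq_trans le_TN.
Qed.

End KernelIdempotent.

Section Terms.
Variable A : finType.
Implicit Types (t : seq nat) (v : seq (Omega A)).

Lemma term_eval_cat t1 t2 v :
  term_eval (t1 ++ t2) v = om_mul (term_eval t1 v) (term_eval t2 v).
Proof. by elim: t1 => [|i t IH] /=; rewrite ?om_mul1 // IH om_mulA. Qed.

Lemma term_eval_set_nth t v k x :
  \max_(i <- t) i < k -> term_eval t (set_nth om_one v k x) = term_eval t v.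
Proof.
elim: t => //= i t IH; rewrite big_cons gtn_max => /andP [ik /IH ->].
by rewrite nth_set_nth /= (ltn_eqF ik).
Qed.

End Terms.

Section Provability.
Variables (Sigma : pseudoid -> Prop) (A : finType).
Local Notation prov := (@provable Sigma A).
Implicit Types p q x y : Omega A.

Lemma Sigma0_provable p q : Sigma0 Sigma p q -> prov p q.
Proof. by move=> pq R HS _ _; apply: HS. Qed.

Lemma provable_trans x y z : prov x y -> prov y z -> prov x z.
Proof. by move=> xy yz R HS HT HC; apply: HT (xy R HS HT HC) (yz R HS HT HC). Qed.

Lemma provable_closed : closed_rel prov.
Proof.
move=> u v uv R HS HT HC; apply: (HC) => ts1 ts2.
have [u' [v' [u'v' [agree_u agree_v]]]] := uv ts1 ts2.
by exists u', v'; split=> //; exact: u'v' R HS HT HC.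
Qed.

Lemma provable_sym p q : prov p q -> prov q p.
Proof.
move=> pq; apply: (pq (fun a b => prov b a)).
- move=> a b [e [sym [phi [t [ws [He phi_hom phi_cont -> ->]]]]]].
  by apply: Sigma0_provable; exists e, (~~ sym), phi, t, ws; case: sym.
- by move=> a b c ab bc; apply: provable_trans bc ab.
- move=> a b ab; apply: provable_closed => ts1 ts2.
  have [a' [b' [a'b' [agree_a agree_b]]]] := ab ts2 ts1.
  by exists b', a'.
Qed.

Lemma provable_axiom e (phi : Omega (projT1 e) -> Omega A) :
  Sigma e -> om_hom phi -> om_continuous phi ->
  prov (phi (projT2 e).1) (phi (projT2 e).2).
Proof.
move=> He phi_hom phi_cont; apply: Sigma0_provable.
by exists e, false, phi, [:: 0], [::]; split; rewrite //= om_mulr1.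
Qed.

Lemma provable_refl e x : Sigma e -> prov x x.
Proof.
move=> He; apply: Sigma0_provable.
exists e, false, (om_subst (fun _ => om_one)), [:: 1], [:: x].
split=> //; rewrite /= ?om_mulr1 //; [exact: om_subst_hom | exact: om_subst_continuous].
Qed.

Lemma Sigma0_mul2 l r p q :
  Sigma0 Sigma p q -> Sigma0 Sigma (om_mul l (om_mul p r)) (om_mul l (om_mul q r)).
Proof.
case=> e [sym [phi [t [ws [He phi_hom phi_cont -> ->]]]]].
set k := \max_(i <- t) i; set ws' := set_nth om_one (set_nth om_one ws k l) k.+1 r.
have eval_t a : term_eval t (a :: ws') = term_eval t (a :: ws).
  rewrite -[a :: ws']/(set_nth om_one (set_nth om_one (a :: ws) k.+1 l) k.+2 r).
  by rewrite !term_eval_set_nth // ltnS ?leqW.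
exists e, sym, phi, (k.+1 :: t ++ [:: k.+2]), ws'; split=> //;
  rewrite /= term_eval_cat /= om_mulr1 eval_t !nth_set_nth /= eqxx;
  by rewrite (ltn_eqF (ltnSn k)) nth_set_nth /= eqxx.
Qed.

Lemma provable_mul2 l r p q :
  prov p q -> prov (om_mul l (om_mul p r)) (om_mul l (om_mul q r)).
Proof.
move=> pq; apply: (pq (fun a b => prov (om_mul l (om_mul a r)) (om_mul l (om_mul b r)))).
- by move=> a b ab; apply: Sigma0_provable; apply: Sigma0_mul2.
- by move=> a b c; apply: provable_trans.
- move=> a b ab; apply: provable_closed => ts1 ts2.
  have [a' [b' [a'b' [agree_a agree_b]]]] := ab ts1 ts2.
  exists (om_mul l (om_mul a' r)), (om_mul l (om_mul b' r)); split=> //.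
  by split; apply: agree_mul (agree_refl _ _) (agree_mul _ (agree_refl _ _)).
Qed.

Lemma provable_mul p p' q q' : prov p p' -> prov q q' -> prov (om_mul p q) (om_mul p' q').
Proof.
move=> pp' qq'; apply: (@provable_trans _ (om_mul p' q)).
  by have := provable_mul2 om_one q pp'; rewrite !om_mul1.
by have := provable_mul2 p' om_one qq'; rewrite !om_mulr1.
Qed.

End Provability.

Lemma holds_in_ev (T : finMonoid) (A : finType) (u v : Omega A) :
  holds_in T u v -> forall e : A -> T, ev u T e = ev v T e.
Proof.
move=> Huv e; apply: (Huv (fun x => ev x T e)) => // x.
exists [:: existT (fun S : finMonoid => A -> S) T e].
by move=> y /= [].
Qed.

Local Notation Sigma := (fun e => e = omega_eq_one).

Lemma models_omega_eq_one (G : finMonoid) :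
  (forall a : G, fm_pow a #|G|`! = fm_one) -> models Sigma G.
Proof.
move=> G_pow _ -> psi [psi1 psiM] psi_cont /=.
have [ts agree_psi] := psi_cont (om_omega (om_letter tt)).
have psi_pow n : psi (om_pow (om_letter tt) n) = fm_pow (psi (om_letter tt)) n.
  by elim: n => [|n IH] //=; rewrite psiM IH.
rewrite psi1 -(G_pow (psi (om_letter tt))).
rewrite -(fm_pow_fact _ (leq_maxl _ (tests_bound ts))).
rewrite -psi_pow; apply/agree_psi/(agree_bounded _ (leq_maxr #|G| _)) => T e le_Tm.
by rewrite ev_om_pow fm_pow_fact.
Qed.

Lemma provable_omega_one (A : finType) (z : Omega A) :
  provable Sigma (om_omega z) om_one.
Proof.
have := @provable_axiom Sigma A omega_eq_one (om_subst (fun _ => z)) erefl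
  (om_subst_hom _) (om_subst_continuous _).
by congr provable; apply: om_ext.
Qed.

Section KernelPart.
Variable B : finType.
Local Notation prov := (@provable Sigma B).

Lemma provable_kernel_idem : prov (kernel_idem B) om_one.
Proof.
apply: provable_closed => ts1 ts2.
exists (kernel_approx B (tests_bound ts1).+1), om_one; split.
  exact: provable_omega_one.
split; last exact: agree_refl.
by apply: agree_bounded (leqnn _) => T e; apply: ev_kernel_idem.
Qed.

Lemma provable_one_kernel_idem : prov om_one (kernel_idem B).
Proof. exact: provable_sym provable_kernel_idem. Qed.

Definition kernel_sandwich (b : B) : Omega B :=
  om_mul (om_mul (kernel_idem B) (om_letter b)) (kernel_idem B).

Definition kernel_part (u : Omega B) : Omega B :=
  om_mul (kernel_idem B) (om_subst kernel_sandwich u).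

Lemma provable_subst_kernel_sandwich u : prov u (om_subst kernel_sandwich u).
Proof.
have prov_letter b : prov (om_letter b) (kernel_sandwich b).
  rewrite -[om_letter b]om_mul1 -[om_mul _ (om_letter b)]om_mulr1.
  apply: provable_mul provable_one_kernel_idem.
  exact: provable_mul provable_one_kernel_idem (provable_refl _ erefl).
have prov_word w : prov (om_word w) (om_subst kernel_sandwich (om_word w)).
  elim: w => [|b w IH] /=.
    by rewrite (om_subst_hom _).1; exact: provable_refl erefl.
  rewrite (om_subst_hom _).2; apply: provable_mul IH.
  suff -> : om_subst kernel_sandwich (om_letter b) = kernel_sandwich b by [].
  exact: om_ext.
apply: provable_closed => ts1 ts2.
have [w /agree_cat [agree1 agree2]] :=
  words_dense u (ts1 ++ map (pull_test kernel_sandwich) ts2).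
exists (om_word w), (om_subst kernel_sandwich (om_word w)); split; first exact: prov_word.
by split=> //; apply: agree_subst.
Qed.

Lemma provable_kernel_part u : prov u (kernel_part u).
Proof.
apply: provable_trans (provable_subst_kernel_sandwich u) _.
rewrite -{1}[om_subst _ u]om_mul1.
exact: provable_mul provable_one_kernel_idem (provable_refl _ erefl).
Qed.

Section KernelGroup.
Variables (T : finMonoid) (e : B -> T).
Let f := ev (kernel_idem B) T e.

Lemma kernel_idem_idem : f ** f = f.
Proof. by rewrite /f (ev_kernel_idem e (leqnn _)) kernel_approxS_idem. Qed.

Lemma kernel_idem_in_kernel : in_kernel e f.
Proof.
rewrite /f (ev_kernel_idem e (leqnn _)).
exact: kernel_approx_in_kernel (covered_by_card e) _.
Qed.

Let f_gen : generated e f := ev_generated _ e.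

Definition kernel_group : finMonoid := local_monoid kernel_idem_idem f_gen.

Definition kernel_assign (b : B) : kernel_group :=
  exist (in_local e f) _
    (in_local_sandwich kernel_idem_idem f_gen (generated_letter e b)).

Lemma kernel_group_models : models Sigma kernel_group.
Proof.
apply: models_omega_eq_one => z.
rewrite -(fm_pow_fact _ (card_local_monoid _ _)).
exact: (local_monoid_pow_fact kernel_idem_in_kernel z (leqnn _)).
Qed.

Lemma ev_kernel_part u : ev (kernel_part u) T e = val (ev u kernel_group kernel_assign).
Proof.
exact: (ev_mul_morph u kernel_assign (fun s t : kernel_group => erefl (val (s ** t)))).
Qed.

End KernelGroup.
End KernelPart.

Theorem theorem8p3 : h_strong (fun e => e = omega_eq_one).
Proof.
move=> B u v Huv.
have kernel_part_uv : kernel_part u = kernel_part v.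
  apply: om_ext => T e; rewrite !ev_kernel_part; congr val.
  exact: (holds_in_ev (Huv _ (@kernel_group_models _ _ e)) (kernel_assign e)).
apply: provable_trans (provable_kernel_part u) _.
by rewrite kernel_part_uv; apply: provable_sym; apply: provable_kernel_part.
Qed.
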